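(* Consider the wireless network described in the context, with nodes sending independent codewords under decode-and-forward. Let $\mathcal{M}^{\mathrm{MSPA}}$ be the route output by the maximum sum-of-received-power algorithm (MSPA), with ties broken arbitrarily. Then $\mathcal{M}^{\mathrm{MSPA}}$ is optimal for DF, i.e., $$R_{\mathrm{DF}}(\mathcal{M}^{\mathrm{MSPA}})=R_{\mathrm{DF}}^{\max}.$$
   Context: Network: a finite set of nodes $\mathcal{S}=\{1,2,\dots,D\}$, $D\ge 2$. Node $1$ is the source and node $D$ is the destination. Received powers: for distinct nodes $i,t$, the power received at $t$ from $i$ is a positive real number $P_{it}$. All receivers have the same noise power $N>0$. Routes: a route is an ordered tuple of distinct nodes $\mathcal{M}=(m_1,\dots,m_L)$ with $m_1=1$ and $L\ge1$. It is a route from the source to the destination if moreover $m_L=D$. For $a\notin\mathcal{M}$, $\mathcal{M}\cup\{a\}$ denotes $(m_1,\dots,m_L,a)$. DF with independent codewords: the reception rate of node $m_t$ ($2\le t\le L$) in route $\mathcal{M}$ is $$R_{m_t}(\mathcal{M})=\tfrac12\log\Big(1+N^{-1}\sum_{i=1}^{t-1}P_{m_i m_t}\Big).$$ The supported DF rate (for $L\ge2$) is $R_{\mathrm{DF}}(\mathcal{M})=\min_{2\le t\le L}R_{m_t}(\mathcal{M})$. Also $R_{\mathrm{DF}}^{\max}=\max R_{\mathrm{DF}}(\mathcal{M})$ over all routes from $1$ to $D$. MSPA: 1. Start with $\mathcal{M}=(1)$. 2. Choose any node $a^*\in\mathcal{S}\setminus\mathcal{M}$ maximizing $\sum_{i\in\mathcal{M}}P_{it}$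 over $t\in\mathcal{S}\setminus\mathcal{M}$, and set $\mathcal{M}\leftarrow\mathcal{M}\cup\{a^*\}$. 3. Repeat step 2 until $D$ has been appended; output $\mathcal{M}$. *)

From Stdlib Require Import Reals List.
Import ListNotations.
Open Scope R_scope.

Definition in_S (D x : nat) : Prop := (1 <= x /\ x <= D)%nat.

Definition is_route (D : nat) (M : list nat) : Prop :=
  NoDup M /\ hd 0%nat M = 1%nat /\ M <> [] /\ Forall (in_S D) M.

Definition is_route_to_dest (D : nat) (M : list nat) : Prop :=
  is_route D M /\ last M 0%nat = D.

Fixpoint sumP (P : nat -> nat -> R) (pre : list nat) (t : nat) : R :=
  match pre with
  | [] => 0
  | a :: r => P a t + sumP P r t
  end.

Definition recv_rate (P : nat -> nat -> R) (N : R) (pre : list nat) (t : nat) : R :=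
  / 2 * ln (1 + / N * sumP P pre t).

Fixpoint rates_aux (P : nat -> nat -> R) (N : R) (pre rest : list nat) : list R :=
  match rest with
  | [] => []
  | a :: r => recv_rate P N pre a :: rates_aux P N (pre ++ [a]) r
  end.

(* Supported DF rate: minimum of the reception rates (meaningful for L >= 2). *)
Definition R_DF (P : nat -> nat -> R) (N : R) (M : list nat) : R :=
  match M with
  | [] => 0
  | m1 :: rest =>
      match rates_aux P N [m1] rest with
      | [] => 0
      | r :: rs => fold_left Rmin rs r
      end
  end.

Definition is_R_DF_max (P : nat -> nat -> R) (N : R) (D : nat) (r : R) : Prop :=
  (exists M, is_route_to_dest D M /\ R_DF P N M = r) /\
  (forall M, is_route_to_dest D M -> R_DF P N M <= r).

(* M is a possible output of MSPA (any tie-breaking): it starts at 1, ends when D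
   is appended (D occurs only as last element, by NoDup), and each appended node
   maximizes the sum of received power from the current route among the nodes of
   S not yet in the route. *)
Definition mspa_output (P : nat -> nat -> R) (D : nat) (M : list nat) : Prop :=
  is_route_to_dest D M /\
  forall k : nat, (1 <= k < length M)%nat ->
    forall t : nat, in_S D t -> ~ In t (firstn k M) ->
      sumP P (firstn k M) t <= sumP P (firstn k M) (nth k M 0%nat).

From Stdlib Require Import Reals List Lra Lia Arith.
Import ListNotations.
Open Scope R_scope.

(* Let M be an MSPA route and let its DF rate be attained at position k, i.e.
   R_DF(M) = R(A, m_k) where A = (m_1, ..., m_{k-1}) is the prefix before m_k.
   Take any route M' from 1 to D.  Since M' starts at 1 (in A) and ends at D
   (not in A, as D is the last node of M), there is a first node t = m'_j of M'
   outside A; all of its predecessors in M' lie in A.  With nonnegative powers,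
   the power t receives from its predecessors is at most the power it receives
   from all of A, which by the greedy choice of MSPA is at most the power m_k
   receives from A.  As the reception rate is monotone in the received power,
       R_DF(M') <= R(pre'_j, t) <= R(A, t) <= R(A, m_k) = R_DF(M). *)

Lemma fold_Rmin_spec (rs : list R) : forall r,
  In (fold_left Rmin rs r) (r :: rs) /\
  (forall x, In x (r :: rs) -> fold_left Rmin rs r <= x).
Proof.
  induction rs as [|a rs IH]; intros r; simpl.
  - split; [left; reflexivity|]. intros x [<-|[]]; lra.
  - destruct (IH (Rmin r a)) as [Hin Hle]. split.
    + destruct Hin as [Hin|Hin]; [|auto].
      rewrite <- Hin. unfold Rmin; destruct (Rle_dec r a); auto.
    + intros x [<-|[<-|Hx]].
      * eapply Rle_trans; [apply Hle; left; reflexivity|apply Rmin_l].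
      * eapply Rle_trans; [apply Hle; left; reflexivity|apply Rmin_r].
      * apply Hle; right; exact Hx.
Qed.

Lemma rates_aux_inv (P : nat -> nat -> R) (N : R) (rest : list nat) : forall pre r,
  In r (rates_aux P N pre rest) ->
  exists i, (i < length rest)%nat /\
    r = recv_rate P N (pre ++ firstn i rest) (nth i rest 0%nat).
Proof.
  induction rest as [|a rest IH]; intros pre r H; simpl in H; [destruct H|].
  destruct H as [<-|H].
  - exists 0%nat. simpl. split; [lia|]. rewrite app_nil_r. reflexivity.
  - destruct (IH _ _ H) as [i [Hi ->]]. exists (S i). simpl. split; [lia|].
    rewrite <- app_assoc. reflexivity.
Qed.

Lemma rates_aux_complete (P : nat -> nat -> R) (N : R) (rest : list nat) : forall pre i,
  (i < length rest)%nat ->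
  In (recv_rate P N (pre ++ firstn i rest) (nth i rest 0%nat)) (rates_aux P N pre rest).
Proof.
  induction rest as [|a rest IH]; intros pre i H; simpl in *; [lia|].
  destruct i as [|i].
  - left. simpl. rewrite app_nil_r. reflexivity.
  - right. simpl.
    replace (pre ++ a :: firstn i rest) with ((pre ++ [a]) ++ firstn i rest)
      by (rewrite <- app_assoc; reflexivity).
    apply IH. lia.
Qed.

Lemma R_DF_le_rate (P : nat -> nat -> R) (N : R) (M : list nat) (j : nat) :
  (1 <= j < length M)%nat ->
  R_DF P N M <= recv_rate P N (firstn j M) (nth j M 0%nat).
Proof.
  intros Hj. destruct M as [|m1 rest]; simpl in Hj; [lia|].
  destruct j as [|j]; [lia|].
  pose proof (rates_aux_complete P N rest [m1] j ltac:(lia)) as Hin.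
  unfold R_DF. destruct (rates_aux P N [m1] rest) as [|r rs]; [destruct Hin|].
  apply (proj2 (fold_Rmin_spec rs r)). exact Hin.
Qed.

Lemma R_DF_attained (P : nat -> nat -> R) (N : R) (M : list nat) :
  (2 <= length M)%nat ->
  exists k, (1 <= k < length M)%nat /\
    R_DF P N M = recv_rate P N (firstn k M) (nth k M 0%nat).
Proof.
  intros HL. destruct M as [|m1 rest]; simpl in HL; [lia|].
  pose proof (rates_aux_complete P N rest [m1] 0 ltac:(lia)) as Hin.
  unfold R_DF. destruct (rates_aux P N [m1] rest) as [|r rs] eqn:E; [destruct Hin|].
  destruct (fold_Rmin_spec rs r) as [Hmin _]. rewrite <- E in Hmin.
  destruct (rates_aux_inv _ _ _ _ _ Hmin) as [i [Hi Heq]].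
  exists (S i). simpl. split; [lia|]. exact Heq.
Qed.

Lemma recv_rate_mono (P : nat -> nat -> R) (N : R) pre t pre' t' :
  0 < N -> 0 <= sumP P pre t -> sumP P pre t <= sumP P pre' t' ->
  recv_rate P N pre t <= recv_rate P N pre' t'.
Proof.
  intros HN H0 H1. unfold recv_rate.
  assert (HiN : 0 < / N) by (apply Rinv_0_lt_compat; auto).
  assert (0 <= / N * sumP P pre t) by (apply Rmult_le_pos; lra).
  assert (Hle : / N * sumP P pre t <= / N * sumP P pre' t')
    by (apply Rmult_le_compat_l; lra).
  apply Rmult_le_compat_l; [lra|].
  destruct (Rle_lt_or_eq_dec _ _ Hle) as [Hlt|Heq].
  - left. apply ln_increasing; lra.
  - rewrite Heq. lra.
Qed.

Lemma sumP_nonneg (P : nat -> nat -> R) (t : nat) (l : list nat) :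
  (forall a, In a l -> 0 <= P a t) -> 0 <= sumP P l t.
Proof.
  induction l as [|a l IH]; intros H; simpl; [lra|].
  assert (0 <= P a t) by (apply H; left; auto).
  assert (0 <= sumP P l t) by (apply IH; intros; apply H; right; auto). lra.
Qed.

Lemma sumP_remove (P : nat -> nat -> R) (t a : nat) (A : list nat) :
  (forall b, In b A -> 0 <= P b t) -> In a A ->
  P a t + sumP P (remove Nat.eq_dec a A) t <= sumP P A t.
Proof.
  induction A as [|b A IH]; intros Hpos Ha; simpl in *; [destruct Ha|].
  destruct (Nat.eq_dec a b) as [<-|Hab].
  - assert (0 <= P a t) by (apply Hpos; auto).
    destruct (in_dec Nat.eq_dec a A) as [HaA|HaA].
    + assert (P a t + sumP P (remove Nat.eq_dec a A) t <= sumP P A t)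
        by (apply IH; auto). lra.
    + rewrite notin_remove by exact HaA. lra.
  - simpl. destruct Ha as [->|Ha]; [congruence|].
    assert (P a t + sumP P (remove Nat.eq_dec a A) t <= sumP P A t)
      by (apply IH; auto). lra.
Qed.

Lemma sumP_incl (P : nat -> nat -> R) (t : nat) (pre : list nat) : forall A,
  NoDup pre -> incl pre A -> (forall b, In b A -> 0 <= P b t) ->
  sumP P pre t <= sumP P A t.
Proof.
  induction pre as [|a pre IH]; intros A Hnd Hinc Hpos; simpl.
  - apply sumP_nonneg; auto.
  - inversion Hnd as [|? ? Hna Hnd']; subst.
    assert (Ha : In a A) by (apply Hinc; left; auto).
    assert (sumP P pre t <= sumP P (remove Nat.eq_dec a A) t).
    { apply IH; auto.
      - intros y Hy. apply in_in_remove; [intros ->; contradiction|].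
        apply Hinc; right; auto.
      - intros b Hb. apply Hpos. eapply in_remove; eauto. }
    pose proof (sumP_remove P t a A Hpos Ha). lra.
Qed.

Lemma first_outside (A l : list nat) :
  (exists x, In x l /\ ~ In x A) ->
  exists j, (j < length l)%nat /\ incl (firstn j l) A /\ ~ In (nth j l 0%nat) A.
Proof.
  induction l as [|a l IH]; intros [x [Hx HA]]; simpl in Hx; [destruct Hx|].
  destruct (in_dec Nat.eq_dec a A) as [Ha|Ha].
  - destruct Hx as [->|Hx]; [contradiction|].
    destruct IH as [j [Hj [Hinc Hn]]]; [eauto|].
    exists (S j). simpl. split; [lia|]. split; [|exact Hn].
    intros y [<-|Hy]; auto.
  - exists 0%nat. simpl. split; [lia|]. split; [intros y []|exact Ha].
Qed.

Lemma in_firstn_in (x n : nat) (l : list nat) : In x (firstn n l) -> In x l.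
Proof.
  intros H. rewrite <- (firstn_skipn n l). apply in_or_app. left; exact H.
Qed.

Lemma NoDup_firstn (n : nat) (l : list nat) : NoDup l -> NoDup (firstn n l).
Proof.
  intros H. rewrite <- (firstn_skipn n l) in H. eapply NoDup_app_remove_r; eauto.
Qed.

(* In a duplicate-free list the last element does not occur in any proper
   prefix; this is why D never precedes the bottleneck of the MSPA route. *)
Lemma last_not_in_prefix (l : list nat) (k : nat) :
  NoDup l -> l <> [] -> (k < length l)%nat -> ~ In (last l 0%nat) (firstn k l).
Proof.
  intros Hnd Hne Hk Hin.
  rewrite <- firstn_removelast in Hin by exact Hk.
  apply in_firstn_in in Hin.
  rewrite (app_removelast_last 0%nat Hne) in Hnd.
  apply (NoDup_remove_2 _ [] _ Hnd). rewrite app_nil_r. exact Hin.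
Qed.

Lemma route_to_dest_length (D : nat) (M : list nat) : (2 <= D)%nat ->
  is_route_to_dest D M -> (2 <= length M)%nat.
Proof.
  intros HD [[_ [Hhd [Hne _]]] Hl].
  destruct M as [|a [|b M]]; simpl in *; try congruence; lia.
Qed.

Lemma route_crosses_cut (D : nat) (M' A : list nat) :
  is_route_to_dest D M' -> In 1%nat A -> ~ In D A ->
  exists j, (1 <= j < length M')%nat /\
    incl (firstn j M') A /\ ~ In (nth j M' 0%nat) A.
Proof.
  intros [[_ [Hhd [Hne _]]] Hlast] H1 HD.
  destruct (first_outside A M') as [j [Hj [Hinc Hout]]].
  { exists D. split; [|exact HD]. rewrite <- Hlast.
    rewrite (app_removelast_last 0%nat Hne) at 2. apply in_or_app. right; left; auto. }
  exists j. split; [|auto]. split; [|exact Hj].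
  destruct j as [|j]; [|lia]. exfalso. apply Hout.
  destruct M' as [|a M']; [congruence|]. simpl in *. subst a. exact H1.
Qed.

Theorem theorem3 (D : nat) (P : nat -> nat -> R) (N : R)
  (hD : (2 <= D)%nat)
  (hP : forall i t, in_S D i -> in_S D t -> i <> t -> 0 < P i t)
  (hN : 0 < N)
  (M : list nat) (hM : mspa_output P D M) :
  is_R_DF_max P N D (R_DF P N M).
Proof.
  destruct hM as [HMd Hgreedy].
  split; [exists M; split; auto|]. intros M' HM'd.
  (* The bottleneck of M is node m_k, fed by the prefix A. *)
  destruct (R_DF_attained P N M (route_to_dest_length D M hD HMd)) as [k [Hk ->]].
  set (A := firstn k M).
  destruct HMd as [[HndM [HhdM [HneM HSM]]] HlastM].
  assert (HA1 : In 1%nat A).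
  { destruct M as [|b M]; [congruence|]. simpl in HhdM. subst b.
    unfold A. destruct k; [lia|]. left; auto. }
  assert (HAD : ~ In D A) by (rewrite <- HlastM; apply last_not_in_prefix; auto; lia).
  (* M' crosses the cut A at its node t = m'_j. *)
  destruct (route_crosses_cut D M' A HM'd HA1 HAD) as [j [Hj [Hinc Hout]]].
  set (t := nth j M' 0%nat) in *.
  destruct HM'd as [[HndM' [_ [_ HSM']]] _].
  rewrite Forall_forall in HSM, HSM'.
  assert (HtS : in_S D t) by (apply HSM', nth_In; lia).
  assert (Hpos : forall b, In b A -> 0 <= P b t).
  { intros b Hb. left. apply hP; auto.
    - apply HSM. eapply in_firstn_in; exact Hb.
    - intros ->. contradiction. }
  assert (Hsub : sumP P (firstn j M') t <= sumP P A t)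
    by (apply sumP_incl; auto using NoDup_firstn).
  assert (Hgr : sumP P A t <= sumP P A (nth k M 0%nat)) by (apply Hgreedy; auto).
  (* R_DF(M') <= R(pre'_j, t) <= R(A, m_k). *)
  eapply Rle_trans; [apply (R_DF_le_rate P N M' j); lia|].
  apply recv_rate_mono; [exact hN| |eapply Rle_trans; eassumption].
  apply sumP_nonneg. intros a Ha. apply Hpos, Hinc, Ha.
Qed.
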